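(* Let $N\ge 1$ and let the parameter space $\Theta\subseteq\mathcal{R}$ of the correlated Bernoulli random graph model be nondegenerate. Then the disagreement vector statistic $\mathcal{H}$ is a complete and sufficient statistic for the family $\{\mathbb{P}_\theta:\theta\in\Theta\}$. Completeness here means: for every $f:\{0,\star,1\}^N\to\mathbb{R}$, if $\mathbb{E}_\theta(f(\mathcal{H}))=0$ for all $\theta\in\Theta$, then $f$ is the zero function.
   Context: Correlated Bernoulli random graph model: fix a positive integer $N$ and let $\mathcal{R}=\{(p_1,\dots,p_N,\varrho_1,\dots,\varrho_N): p_i,\varrho_i\in[0,1]\}$. A parameter space is any subset $\Theta\subseteq\mathcal{R}$. For $\theta=(p_1,\dots,p_N,\varrho_1,\dots,\varrho_N)\in\Theta$, the random vectors $X=(X_1,\dots,X_N)$, $Y=(Y_1,\dots,Y_N)\in\{0,1\}^N$ are such that the pairs $(X_i,Y_i)$, $i=1,\dots,N$, are independent; $X_i,Y_i$ are each marginally Bernoulli$(p_i)$ with Pearson correlation $\varrho_i$. Equivalently $\mathbb{P}(X_i=Y_i=1)=p_i^2+\varrho_ip_i(1-p_i)$, $\mathbb{P}(X_i=Y_i=0)=(1-p_i)^2+\varrho_ip_i(1-p_i)$, $\mathbb{P}(X_i=1,Y_i=0)=\mathbb{P}(X_i=0,Y_i=1)=(1-\varrho_i)p_i(1-p_i)$. The sample space is $\mathcal{X}=\{(x,y):x,y\in\{0,1\}^N\}$; a statistic is any function on $\mathcal{X}$. Let $\mathcal{R}^o=\{(p_1,\dots,p_N,0,\dots,0):p_1,\dots,p_N\in\mathbb{R}\}$.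 $\Theta$ is called nondegenerate if $\Theta\cap\mathcal{R}^o$ has an interior point relative to $\mathcal{R}^o$, i.e. there exist $z\in\Theta\cap\mathcal{R}^o$ and $\epsilon>0$ such that $\Theta\cap\mathcal{R}^o$ contains every point of $\mathcal{R}^o$ at distance less than $\epsilon$ from $z$. The disagreement vector statistic $\mathcal{H}:\mathcal{X}\to\{0,\star,1\}^N$ has $i$th component $1$ if $x_i=y_i=1$, $0$ if $x_i=y_i=0$, and $\star$ if $x_i\ne y_i$. *)

From HB Require Import structures.
From mathcomp Require Import all_boot all_order all_algebra.
From mathcomp Require Import reals.
Set Implicit Arguments. Unset Strict Implicit. Unset Printing Implicit Defensive.
Import Order.TTheory GRing.Theory Num.Theory.
Local Open Scope ring_scope.

(* A parameter theta = (p_1..p_N, rho_1..rho_N), stored as a pair (p, rho). *)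
Definition param (R : realType) (N : nat) : Type :=
  ({ffun 'I_N -> R} * {ffun 'I_N -> R})%type.

Definition sample (N : nat) : finType :=
  ({ffun 'I_N -> bool} * {ffun 'I_N -> bool})%type.

(* The alphabet {0, star, 1} encoded as option bool:
   Some false = 0, None = star, Some true = 1. *)
Definition tri : finType := option bool.

Definition in_calR (R : realType) (N : nat) (th : param R N) : Prop :=
  forall i : 'I_N, 0 <= th.1 i <= 1 /\ 0 <= th.2 i <= 1.

(* Nondegeneracy: Theta cap R^o has an interior point relative to R^o
   (R^o identified with R^N via p |-> (p, 0); Euclidean distance). *)
Definition nondegenerate_param (R : realType) (N : nat) (Theta : param R N -> Prop) : Prop :=
  exists (z : {ffun 'I_N -> R}) (eps : R),
    0 < eps /\ Theta (z, [ffun _ => 0]) /\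
    forall p : {ffun 'I_N -> R},
      Num.sqrt (\sum_(i < N) (p i - z i) ^+ 2) < eps -> Theta (p, [ffun _ => 0]).

Definition cell_prob (R : realType) (p rho : R) (a b : bool) : R :=
  match a, b with
  | true, true => p ^+ 2 + rho * p * (1 - p)
  | false, false => (1 - p) ^+ 2 + rho * p * (1 - p)
  | _, _ => (1 - rho) * p * (1 - p)
  end.

Definition prob (R : realType) (N : nat) (th : param R N) (w : sample N) : R :=
  \prod_(i < N) cell_prob (th.1 i) (th.2 i) (w.1 i) (w.2 i).

Definition disagree (N : nat) (w : sample N) : {ffun 'I_N -> tri} :=
  [ffun i => if w.1 i == w.2 i then Some (w.1 i) else None].

Definition probH (R : realType) (N : nat) (th : param R N) (h : {ffun 'I_N -> tri}) : R :=
  \sum_(w : sample N | disagree w == h) prob th w.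

Definition expectH (R : realType) (N : nat) (th : param R N)
  (f : {ffun 'I_N -> tri} -> R) : R :=
  \sum_(w : sample N) prob th w * f (disagree w).

(* Sufficiency: the conditional distribution of the data given H admits a
   version q not depending on theta: P_theta(w) = q(w) * P_theta(H = H(w)). *)
Definition sufficient_H (R : realType) (N : nat) (Theta : param R N -> Prop) : Prop :=
  exists q : sample N -> R,
    forall th, Theta th -> forall w : sample N,
      prob th w = q w * probH th (disagree w).

Definition complete_H (R : realType) (N : nat) (Theta : param R N -> Prop) : Prop :=
  forall f : {ffun 'I_N -> tri} -> R,
    (forall th, Theta th -> expectH th f = 0) -> forall h, f h = 0.

From mathcomp Require Import all_boot all_order all_algebra.
From mathcomp Require Import reals ring lra.
Import Order.TTheory GRing.Theory Num.Theory.
Local Open Scope ring_scope.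
Set Implicit Arguments. Unset Strict Implicit.

(** The coordinates of H are independent and H_i has a law depending only on
    (p_i, rho_i).  Sufficiency: the disagreeing cells (1,0) and (0,1) are
    equally likely, so given H the data are uniform on the preimage of H.
    Completeness: for rho = 0 the three probabilities P(H_i = c) are linearly
    independent quadratics in p_i, so a suitable combination of the laws of H
    at the 3^N grid points z + d t, t in {0,1,2}^N, is the point mass at any
    prescribed h0.  For d small these points lie in the ball around z where
    E f(H) = 0, hence f h0 = 0. *)

Section DisagreementStatistic.
Variable R : realType.

Definition disagree1 (a b : bool) : tri := if a == b then Some a else None.

Lemma disagreeE N (w : sample N) i : disagree w i = disagree1 (w.1 i) (w.2 i).
Proof. by rewrite ffunE. Qed.

Definition tri_prob (p rho : R) (c : tri) : R :=
  \sum_a \sum_b (disagree1 a b == c)%:R * cell_prob p rho a b.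

Lemma sum_sample_prod N (F : 'I_N -> bool -> bool -> R) :
  \sum_(w : sample N) \prod_i F i (w.1 i) (w.2 i) = \prod_i \sum_a \sum_b F i a b.
Proof.
rewrite -(pair_bigA _ (fun x y : {ffun 'I_N -> bool} => \prod_i F i (x i) (y i))) bigA_distr_bigA /=.
by apply: eq_bigr => x _; rewrite bigA_distr_bigA.
Qed.

Lemma natr_eq_ffun N (T : finType) (f g : {ffun 'I_N -> T}) :
  (f == g)%:R = \prod_i (f i == g i)%:R :> R.
Proof.
have [->|neq_fg] := eqVneq f g; first by rewrite big1 // => i _; rewrite eqxx.
have /existsP[i neq_fgi] : [exists i, f i != g i].
  by apply: contraNT neq_fg => /existsPn eq_fg; apply/eqP/ffunP => i; exact/eqP/negPn.
by rewrite (bigD1 i) //= (negbTE neq_fgi) mul0r.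
Qed.

Lemma probH_prod N (th : param R N) h :
  probH th h = \prod_i tri_prob (th.1 i) (th.2 i) (h i).
Proof.
rewrite /probH big_mkcond -sum_sample_prod; apply: eq_bigr => w _.
rewrite big_split /= -/(prob th w).
have -> : \prod_i (disagree1 (w.1 i) (w.2 i) == h i)%:R = (disagree w == h)%:R :> R.
  by rewrite natr_eq_ffun; apply: eq_bigr => i _; rewrite disagreeE.
by case: eqP; rewrite ?mul1r ?mul0r.
Qed.

Lemma expectH_law N (th : param R N) (f : {ffun 'I_N -> tri} -> R) :
  expectH th f = \sum_h probH th h * f h.
Proof.
rewrite /expectH (partition_big (@disagree N) predT) //=.
by apply: eq_bigr => h _; rewrite /probH mulr_suml; apply: eq_bigr => w /eqP ->.
Qed.

Definition cond_weight (a b : bool) : R := if a == b then 1 else 2^-1.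

Lemma cell_prob_factor p rho a b :
  cell_prob p rho a b = cond_weight a b * tri_prob p rho (disagree1 a b).
Proof. by rewrite /cond_weight /tri_prob !big_bool; case: a; case: b => /=; field. Qed.

Lemma disagree_sufficient N (Th : param R N -> Prop) : sufficient_H Th.
Proof.
exists (fun w : sample N => \prod_i cond_weight (w.1 i) (w.2 i)) => th _ w.
rewrite probH_prod -big_split; apply: eq_bigr => i _.
by rewrite disagreeE cell_prob_factor.
Qed.

Definition lagrange3 (z d : R) (t : 'I_3) (y : R) : R :=
  match val t with
  | 0%N => (y - (z + d)) * (y - (z + 2 * d)) / (2 * d ^+ 2)
  | 1%N => - ((y - z) * (y - (z + 2 * d))) / d ^+ 2
  | _ => (y - z) * (y - (z + d)) / (2 * d ^+ 2)
  end.

(* [lagrange3 z d t] is the Lagrange basis polynomial of the node z + t d, so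
   [fun t => dual_coef z d t c] represents the linear functional on quadratics
   g |-> g(1), g(0) or 2 g(1/2) - (g(1) + g(0)) / 2, dual to the basis
   P(H_i = 1), P(H_i = 0), P(H_i = star) of quadratics in p_i (with rho_i = 0). *)
Definition dual_coef (z d : R) (t : 'I_3) (c : tri) : R :=
  match c with
  | Some true => lagrange3 z d t 1
  | Some false => lagrange3 z d t 0
  | None => 2 * lagrange3 z d t (2^-1) - (lagrange3 z d t 1 + lagrange3 z d t 0) / 2
  end.

Lemma dual_coefP (z d : R) (c c' : tri) : d != 0 ->
  \sum_(t < 3) dual_coef z d t c * tri_prob (z + t%:R * d) 0 c' = (c' == c)%:R.
Proof.
move=> d_neq0; rewrite !big_ord_recr big_ord0 /tri_prob !big_bool /=.
by case: c => [[]|]; case: c' => [[]|]; rewrite /dual_coef /lagrange3 /=; field.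
Qed.

Definition grid_point N (z : {ffun 'I_N -> R}) (d : R) (t : {ffun 'I_N -> 'I_3}) :
  param R N := ([ffun i => z i + (t i)%:R * d], [ffun _ => 0]).

Lemma grid_dual N (z : {ffun 'I_N -> R}) (d : R) (h0 h : {ffun 'I_N -> tri}) :
  d != 0 ->
  \sum_(t : {ffun 'I_N -> 'I_3})
     (\prod_i dual_coef (z i) d (t i) (h0 i)) * probH (grid_point z d t) h =
  (h == h0)%:R.
Proof.
move=> d_neq0; rewrite natr_eq_ffun.
under [RHS]eq_bigr => i _ do rewrite -(dual_coefP (z i) (h0 i) (h i) d_neq0).
rewrite bigA_distr_bigA; apply: eq_bigr => t _.
by rewrite probH_prod -big_split; apply: eq_bigr => i _; rewrite !ffunE.
Qed.

Lemma sqrt_sum_sqr_lt n (u : 'I_n -> R) (r eps : R) :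
  0 < eps -> (forall i, 0 <= u i <= r) -> n%:R * r ^+ 2 < eps ^+ 2 ->
  Num.sqrt (\sum_i u i ^+ 2) < eps.
Proof.
move=> eps_gt0 u_bnd lt_eps.
rewrite -[eps]ger0_norm ?ltW // -sqrtr_sqr ltr_sqrt ?exprn_gt0 //.
apply: le_lt_trans lt_eps; rewrite mulr_natl -[X in _ *+ X]card_ord -sumr_const.
apply: ler_sum => i _; have /andP[u_ge0 u_le] := u_bnd i.
by rewrite lerXn2r // nnegrE (le_trans u_ge0).
Qed.

Lemma grid_point_near N (z : {ffun 'I_N -> R}) (eps : R) : 0 < eps ->
  exists2 d, d != 0 & forall t,
    Num.sqrt (\sum_i ((grid_point z d t).1 i - z i) ^+ 2) < eps.
Proof.
move=> eps_gt0; pose M : R := N.+1%:R.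
have M_gt0 : 0 < M by rewrite ltr0n.
pose d := eps / (2 * M).
have d_gt0 : 0 < d by rewrite divr_gt0 ?mulr_gt0.
exists d => [|t]; first by rewrite gt_eqF.
apply: (sqrt_sum_sqr_lt (r := 2 * d)) => // [i|].
  have t_le2 : (t i)%:R <= 2 :> R by rewrite ler_nat -ltnS ltn_ord.
  by rewrite ffunE addrC addKr (ler_wpM2r (ltW d_gt0) t_le2) mulr_ge0 // ltW.
have -> : 2 * d = eps / M by rewrite /d; field; rewrite addrC natr1 pnatr_eq0.
have M_eq : M = N%:R + 1 by rewrite /M -natr1.
rewrite expr_div_n mulrA ltr_pdivrMr ?exprn_gt0 // M_eq.
have : 0 < eps ^+ 2 by rewrite exprn_gt0.
have : 0 <= N%:R :> R by [].
nra.
Qed.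

Lemma disagree_complete N (Th : param R N -> Prop) :
  nondegenerate_param Th -> complete_H Th.
Proof.
case=> z [eps [eps_gt0 [_ ball_Th]]] f Ef0 h0.
have [d d_neq0 near_z] := grid_point_near z eps_gt0.
pose coef (t : {ffun 'I_N -> 'I_3}) := \prod_i dual_coef (z i) d (t i) (h0 i).
have coefP h : \sum_t coef t * (probH (grid_point z d t) h * f h) = (h == h0)%:R * f h.
  by rewrite -(grid_dual z h0 h d_neq0) mulr_suml; apply: eq_bigr => t _; rewrite mulrA.
have -> : f h0 = \sum_t coef t * expectH (grid_point z d t) f.
  under eq_bigr do rewrite expectH_law mulr_sumr.
  rewrite exchange_big /=; under eq_bigr do rewrite coefP.
  by rewrite (bigD1 h0) //= eqxx mul1r big1 ?addr0 // => h /negbTE ->; rewrite mul0r.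
by rewrite big1 // => t _; rewrite Ef0 ?mulr0 //; apply: ball_Th; exact: near_z.
Qed.

End DisagreementStatistic.

Theorem theorem1 (R : realType) (N : nat) (Th : param R N -> Prop) :
  (0 < N)%N ->
  (forall th, Th th -> in_calR th) ->
  nondegenerate_param Th ->
  complete_H Th /\ sufficient_H Th.
Proof.
move=> _ _ nondeg; split; [exact: disagree_complete | exact: disagree_sufficient].
Qed.
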